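(* Let $X$ be a set, $\mathcal{F}\subseteq\mathcal{P}(X)$ a field, $\mathcal{E}\subseteq\mathcal{F}$ an arbitrary subset, and $(\mu^+,\mu^-)$ a conjugate pair of set functions on $\mathcal{F}$ such that $\mu^+(A)=\mu^-(A)$ for all $A\in\mathcal{E}$. Then the pseudometric space $(\mathcal{E}, d_{\mu^+})$ is complete if and only if the following condition holds: for every sequence $(A_i)_{i\in\mathbb{N}}$ in $\mathcal{E}$ such that the nets $\{\mu^+(\bigcup_{k=i}^j A_k): i,j\in\mathbb{N}, i\le j\}$ and $\{\mu^-(\bigcup_{k=i}^j A_k): i,j\in\mathbb{N}, i\le j\}$ converge to a common limit $L$, the net $\{\bigcup_{k=i}^j A_k: i,j\in\mathbb{N}, i\le j\}$ converges in $d_{\mu^+}$ to some $A\in\mathcal{E}$ with $\mu^+(A)=L$.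
   Context: A field is a family of subsets of $X$ containing $\emptyset$ and closed under complements and finite unions. $I_A$ denotes the indicator function of $A$. Consider $\mu^+,\mu^-:\mathcal{F}\to[0,1]$ with $\mu^\pm(\emptyset)=0$ and $\mu^\pm(X)=1$. $\mu^+$ is subadditive if $I_A\le I_B+I_C\implies \mu^+(A)\le\mu^+(B)+\mu^+(C)$; $\mu^-$ is superadditive if $I_A\ge I_B+I_C\implies\mu^-(A)\ge\mu^-(B)+\mu^-(C)$; $\mu^-$ is co-subadditive with respect to $\mu^+$ if $I_A\le I_B+I_C\implies\mu^-(A)\le\mu^-(B)+\mu^+(C)$; $\mu^+$ is co-superadditive with respect to $\mu^-$ if $I_A\ge I_B+I_C\implies\mu^+(A)\ge\mu^+(B)+\mu^-(C)$ (all for $A,B,C\in\mathcal{F}$). The pair $(\mu^+,\mu^-)$ is conjugate if all four properties hold. For subadditive $\mu^+$, $d_{\mu^+}(A,B):=\mu^+(A\triangle B)$ is a pseudometric on $\mathcal{F}$ (restricted to $\mathcal{E}$ here). The index set $\{(i,j): i\le j\}$ is directed by the product order $(i,j)\le(k,l)\iff i\le k$ and $j\le l$. *)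

From Stdlib Require Import Reals Lra Lia Classical ClassicalEpsilon.
Open Scope R_scope.


Definition ind {X : Type} (A : X -> Prop) (x : X) : R :=
  if excluded_middle_informative (A x) then 1 else 0.

Definition emptyset {X : Type} : X -> Prop := fun _ => False.
Definition fullset {X : Type} : X -> Prop := fun _ => True.
Definition compl {X : Type} (A : X -> Prop) : X -> Prop := fun x => ~ A x.
Definition union {X : Type} (A B : X -> Prop) : X -> Prop := fun x => A x \/ B x.
Definition symdiff {X : Type} (A B : X -> Prop) : X -> Prop :=
  fun x => (A x /\ ~ B x) \/ (B x /\ ~ A x).

Definition is_field {X : Type} (F : (X -> Prop) -> Prop) : Prop :=
  F emptyset /\
  (forall A, F A -> F (compl A)) /\
  (forall A B, F A -> F B -> F (union A B)).

Definition subadditive {X : Type} (F : (X -> Prop) -> Prop) (mup : (X -> Prop) -> R) :=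
  forall A B C, F A -> F B -> F C ->
    (forall x, ind A x <= ind B x + ind C x) -> mup A <= mup B + mup C.

Definition superadditive {X : Type} (F : (X -> Prop) -> Prop) (mum : (X -> Prop) -> R) :=
  forall A B C, F A -> F B -> F C ->
    (forall x, ind A x >= ind B x + ind C x) -> mum A >= mum B + mum C.

Definition co_subadditive {X : Type} (F : (X -> Prop) -> Prop) (mum mup : (X -> Prop) -> R) :=
  forall A B C, F A -> F B -> F C ->
    (forall x, ind A x <= ind B x + ind C x) -> mum A <= mum B + mup C.

Definition co_superadditive {X : Type} (F : (X -> Prop) -> Prop) (mup mum : (X -> Prop) -> R) :=
  forall A B C, F A -> F B -> F C ->
    (forall x, ind A x >= ind B x + ind C x) -> mup A >= mup B + mum C.

Definition normalized_setfun {X : Type} (F : (X -> Prop) -> Prop) (mu : (X -> Prop) -> R) :=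
  (forall A, F A -> 0 <= mu A <= 1) /\ mu emptyset = 0 /\ mu fullset = 1.

Definition conjugate_pair {X : Type} (F : (X -> Prop) -> Prop) (mup mum : (X -> Prop) -> R) :=
  normalized_setfun F mup /\ normalized_setfun F mum /\
  subadditive F mup /\ superadditive F mum /\
  co_subadditive F mum mup /\ co_superadditive F mup mum.

Definition dmu {X : Type} (mup : (X -> Prop) -> R) (A B : X -> Prop) : R := mup (symdiff A B).

Definition complete_pseudo {T : Type} (E : T -> Prop) (d : T -> T -> R) : Prop :=
  forall a : nat -> T, (forall n, E (a n)) ->
    (forall eps, eps > 0 -> exists N, forall m n, (N <= m)%nat -> (N <= n)%nat -> d (a m) (a n) < eps) ->
    exists A, E A /\
      forall eps, eps > 0 -> exists N, forall n, (N <= n)%nat -> d (a n) A < eps.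

Definition union_ij {X : Type} (A : nat -> X -> Prop) (i j : nat) : X -> Prop :=
  fun x => exists k, (i <= k <= j)%nat /\ A k x.

(* convergence of a real net indexed by {(i,j) : i <= j} with the product order *)
Definition net_cvg (f : nat -> nat -> R) (L : R) : Prop :=
  forall eps, eps > 0 -> exists i0 j0, (i0 <= j0)%nat /\
    forall i j, (i0 <= i)%nat -> (j0 <= j)%nat -> (i <= j)%nat -> Rabs (f i j - L) < eps.

Definition net_cvg_d {T : Type} (d : T -> T -> R) (f : nat -> nat -> T) (A : T) : Prop :=
  forall eps, eps > 0 -> exists i0 j0, (i0 <= j0)%nat /\
    forall i j, (i0 <= i)%nat -> (j0 <= j)%nat -> (i <= j)%nat -> d (f i j) A < eps.

(* Co-superadditivity gives [mup (P \ Q) <= mup P - mum Q] for [Q] inside [P], so the distance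
   between [A m] and [A n] is at most [2 mup P - mum (A m) - mum (A n)] with [P] the union of the
   sets between them; when both union nets tend to the same limit this forces [A] to be Cauchy, and
   a limit of [A] is then also a limit of the union net.  Conversely, a Cauchy sequence has a
   subsequence [b] with [dmu (b k) (b (S k)) < 2^-(k+1)], and
   [mup (b i) = mum (b i) <= mum (U b i j) <= mup (U b i j) <= mup (b i) + 2^-i],
   so both nets converge to [lim mup (b i)]; the limit of the union net given by the hypothesis
   is a limit of its diagonal [b], hence of the Cauchy sequence. *)

From Stdlib Require Import Reals Lra Lia Classical ClassicalEpsilon FunctionalExtensionality PropExtensionality.
Open Scope R_scope.

Lemma set_ext {X : Type} (A B : X -> Prop) : (forall x, A x <-> B x) -> A = B.
Proof. intro h; extensionality x; apply propositional_extensionality, h. Qed.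

Lemma ind_le_add {X : Type} (A B C : X -> Prop) :
  (forall x, A x -> B x \/ C x) -> forall x, ind A x <= ind B x + ind C x.
Proof.
  intros h x; unfold ind.
  destruct (excluded_middle_informative (A x)) as [hA|hA];
  destruct (excluded_middle_informative (B x)); destruct (excluded_middle_informative (C x));
  try lra; destruct (h x hA); contradiction.
Qed.

Lemma ind_ge_add {X : Type} (A B C : X -> Prop) :
  (forall x, B x -> A x) -> (forall x, C x -> A x) -> (forall x, B x -> C x -> False) ->
  forall x, ind A x >= ind B x + ind C x.
Proof.
  intros hB hC hBC x; unfold ind.
  destruct (excluded_middle_informative (A x));
  destruct (excluded_middle_informative (B x)); destruct (excluded_middle_informative (C x));
  try lra; exfalso; eauto.
Qed.

Lemma union_ij_diag {X : Type} (A : nat -> X -> Prop) n : union_ij A n n = A n.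
Proof.
  apply set_ext; intro x; split.
  - intros [k [hk h]]; replace n with k by lia; exact h.
  - intro h; exists n; split; [lia | exact h].
Qed.

Lemma union_ij_empty {X : Type} (A : nat -> X -> Prop) i j :
  (j < i)%nat -> union_ij A i j = emptyset.
Proof.
  intro hji; apply set_ext; intro x; split; [intros [k [hk _]]; lia | contradiction].
Qed.

Lemma union_ij_succ {X : Type} (A : nat -> X -> Prop) i j :
  (i <= S j)%nat -> union_ij A i (S j) = union (union_ij A i j) (A (S j)).
Proof.
  intro hij; apply set_ext; intro x; split.
  - intros [k [hk h]]; destruct (Nat.eq_dec k (S j)) as [->|ne].
    + now right.
    + left; exists k; split; [lia | exact h].
  - intros [[k [hk h]]|h]; [exists k | exists (S j)]; split; auto; lia.
Qed.

Section Field.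

Context {X : Type} {F : (X -> Prop) -> Prop}.
Hypothesis hF : is_field F.

Lemma field_empty : F emptyset.
Proof. apply hF. Qed.

Lemma field_diff A B : F A -> F B -> F (fun x => A x /\ ~ B x).
Proof.
  destruct hF as [_ [hcompl hunion]]; intros hA hB.
  replace (fun x => A x /\ ~ B x) with (compl (union (compl A) B)); [auto |].
  apply set_ext; intro x; unfold compl, union; split.
  - intro h; split; [apply NNPP |]; tauto.
  - tauto.
Qed.

Lemma field_symdiff A B : F A -> F B -> F (symdiff A B).
Proof.
  intros hA hB; apply hF; apply field_diff; assumption.
Qed.

Lemma field_union_ij A : (forall k, F (A k)) -> forall i j, F (union_ij A i j).
Proof.
  intros hA i j; induction j as [|j IH].
  - destruct i as [|i].
    + rewrite union_ij_diag; apply hA.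
    + rewrite union_ij_empty by lia; apply field_empty.
  - destruct (Nat.le_gt_cases i (S j)) as [hij|hij].
    + rewrite union_ij_succ by exact hij; apply hF; auto.
    + rewrite union_ij_empty by exact hij; apply field_empty.
Qed.

End Field.

Definition d_cauchy {T : Type} (d : T -> T -> R) (a : nat -> T) : Prop :=
  forall eps, eps > 0 -> exists N, forall m n, (N <= m)%nat -> (N <= n)%nat -> d (a m) (a n) < eps.

Definition d_cvg {T : Type} (d : T -> T -> R) (a : nat -> T) (A : T) : Prop :=
  forall eps, eps > 0 -> exists N, forall n, (N <= n)%nat -> d (a n) A < eps.

Lemma net_cvg_d_iff_tail {T : Type} (d : T -> T -> R) (f : nat -> nat -> T) (A : T) :
  net_cvg_d d f A <->
  forall eps, eps > 0 -> exists K, forall i j, (K <= i <= j)%nat -> d (f i j) A < eps.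
Proof.
  split.
  - intros h eps heps; destruct (h eps heps) as [i0 [j0 [_ hij]]].
    exists (Nat.max i0 j0); intros i j hK; apply hij; lia.
  - intros h eps heps; destruct (h eps heps) as [K hK].
    exists K, K; split; [lia |]; intros i j hi _ hij; apply hK; lia.
Qed.

Lemma net_cvg_iff_tail (f : nat -> nat -> R) (L : R) :
  net_cvg f L <->
  forall eps, eps > 0 -> exists K, forall i j, (K <= i <= j)%nat -> Rabs (f i j - L) < eps.
Proof. exact (net_cvg_d_iff_tail (fun x y => Rabs (x - y)) f L). Qed.

Lemma d_cvg_diag {T : Type} (d : T -> T -> R) (f : nat -> nat -> T) (A : T) :
  net_cvg_d d f A -> d_cvg d (fun n => f n n) A.
Proof.
  intros h eps heps; destruct (proj1 (net_cvg_d_iff_tail d f A) h eps heps) as [K hK].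
  exists K; intros n hn; apply hK; lia.
Qed.

Lemma Un_cv_subseq (u : nat -> R) (phi : nat -> nat) (L : R) :
  (forall k, (k <= phi k)%nat) -> Un_cv u L -> Un_cv (fun k => u (phi k)) L.
Proof.
  intros hphi hu eps heps; destruct (hu eps heps) as [N hN].
  exists N; intros k hk; apply hN; specialize (hphi k); lia.
Qed.

Lemma half_pow_lt (eps : R) : eps > 0 -> exists K, forall k, (K <= k)%nat -> (1/2) ^ k < eps.
Proof.
  intro heps; destruct (pow_lt_1_zero (1/2) ltac:(rewrite Rabs_pos_eq; lra) eps heps) as [K hK].
  exists K; intros k hk; specialize (hK k hk).
  rewrite Rabs_pos_eq in hK; [exact hK | apply pow_le; lra].
Qed.

(* [phi] is a strictly increasing majorant of the Cauchy moduli for the tolerances [(1/2)^(S k)]. *)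
Lemma d_cauchy_fast_subseq {T : Type} (d : T -> T -> R) (a : nat -> T) :
  d_cauchy d a ->
  exists phi : nat -> nat, (forall k, (k <= phi k)%nat) /\
    forall k, d (a (phi k)) (a (phi (S k))) < (1/2) ^ (S k).
Proof.
  intro ha.
  destruct (choice (fun k N => forall m n, (N <= m)%nat -> (N <= n)%nat ->
                      d (a m) (a n) < (1/2) ^ (S k)))
    as [N hN].
  { intro k; apply ha, pow_lt; lra. }
  set (phi := fix phi k := match k with
                           | O => N O
                           | S k' => S (Nat.max (phi k') (N (S k')))
                           end).
  assert (hphiN : forall k, (N k <= phi k)%nat) by (intros [|k]; simpl; lia).
  exists phi; split.
  - intro k; induction k as [|k IH]; simpl; lia.
  - intro k; apply hN; [apply hphiN |].
    pose proof (hphiN k); simpl; lia.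
Qed.

Lemma d_cvg_of_subseq {T : Type} (E : T -> Prop) (d : T -> T -> R)
  (triangle : forall x y z, E x -> E y -> E z -> d x z <= d x y + d y z)
  (a : nat -> T) (phi : nat -> nat) (B : T) :
  (forall n, E (a n)) -> E B -> (forall k, (k <= phi k)%nat) ->
  d_cauchy d a -> d_cvg d (fun k => a (phi k)) B -> d_cvg d a B.
Proof.
  intros hE hB hphi hcauchy hsub eps heps.
  destruct (hcauchy (eps / 2) ltac:(lra)) as [N hN].
  destruct (hsub (eps / 2) ltac:(lra)) as [K hK].
  set (k := Nat.max N K).
  exists N; intros n hn.
  pose proof (triangle (a n) (a (phi k)) B (hE n) (hE (phi k)) hB).
  pose proof (hN n (phi k) hn ltac:(specialize (hphi k); lia)).
  pose proof (hK k ltac:(lia)).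
  lra.
Qed.

Section ConjugatePair.

Context {X : Type} {F : (X -> Prop) -> Prop} {mup mum : (X -> Prop) -> R}.
Hypothesis hF : is_field F.
Hypothesis hconj : conjugate_pair F mup mum.

Lemma mup_le_add A B C : F A -> F B -> F C ->
  (forall x, A x -> B x \/ C x) -> mup A <= mup B + mup C.
Proof.
  destruct hconj as [_ [_ [hsub _]]]; intros; apply hsub; auto; apply ind_le_add; auto.
Qed.

Lemma mup_mono A B : F A -> F B -> (forall x, A x -> B x) -> mup A <= mup B.
Proof.
  destruct hconj as [[_ [hp0 _]] _]; intros hA hB hAB.
  pose proof (mup_le_add A B emptyset hA hB (field_empty hF) (fun x hx => or_introl (hAB x hx))).
  lra.
Qed.

Lemma mum_mono A B : F A -> F B -> (forall x, A x -> B x) -> mum A <= mum B.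
Proof.
  destruct hconj as [_ [[_ [hm0 _]] [_ [hsup _]]]]; intros hA hB hAB.
  pose proof (hsup B A emptyset hB hA (field_empty hF)
    (ind_ge_add _ _ _ hAB (fun x (hx : emptyset x) => False_ind _ hx) (fun x _ hx => hx))).
  lra.
Qed.

Lemma mum_le_mup A : F A -> mum A <= mup A.
Proof.
  destruct hconj as [_ [[_ [hm0 _]] [_ [_ [hcsub _]]]]]; intro hA.
  pose proof (hcsub A emptyset A hA (field_empty hF) hA (ind_le_add _ _ _ (fun x hx => or_intror hx))).
  lra.
Qed.

Lemma mup_diff_le P Q : F P -> F Q -> (forall x, Q x -> P x) ->
  mup (fun x => P x /\ ~ Q x) <= mup P - mum Q.
Proof.
  destruct hconj as [_ [_ [_ [_ [_ hcsup]]]]]; intros hP hQ hQP.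
  pose proof (hcsup P _ Q hP (field_diff hF P Q hP hQ) hQ
    (ind_ge_add _ _ _ (fun x hx => proj1 hx) hQP (fun x hx hQx => proj2 hx hQx))).
  lra.
Qed.

Lemma dmu_comm A B : dmu mup A B = dmu mup B A.
Proof. unfold dmu; f_equal; apply set_ext; intro x; unfold symdiff; tauto. Qed.

Lemma dmu_triangle A B C : F A -> F B -> F C ->
  dmu mup A C <= dmu mup A B + dmu mup B C.
Proof.
  intros hA hB hC; unfold dmu; apply mup_le_add; try apply (field_symdiff hF); auto.
  intro x; unfold symdiff; destruct (classic (B x)); tauto.
Qed.

Lemma mup_le_add_dmu A B : F A -> F B -> mup A <= mup B + dmu mup A B.
Proof.
  intros hA hB; unfold dmu; apply mup_le_add; try apply (field_symdiff hF); auto.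
  intro x; unfold symdiff; destruct (classic (B x)); tauto.
Qed.

Lemma Rabs_mup_sub_le_dmu A B : F A -> F B -> Rabs (mup A - mup B) <= dmu mup A B.
Proof.
  intros hA hB; pose proof (mup_le_add_dmu A B hA hB) as hAB.
  pose proof (mup_le_add_dmu B A hB hA) as hBA; rewrite dmu_comm in hBA.
  apply Rabs_le; lra.
Qed.

Lemma dmu_le_of_subset P Q : F P -> F Q -> (forall x, Q x -> P x) ->
  dmu mup P Q <= mup P - mum Q.
Proof.
  intros hP hQ hQP; eapply Rle_trans; [| exact (mup_diff_le P Q hP hQ hQP)].
  apply mup_mono; [apply (field_symdiff hF) | apply (field_diff hF) |]; auto.
  intros x [h | [hQ' hP']]; [exact h | exfalso; auto].
Qed.

Lemma dmu_le_of_common_superset A B P : F A -> F B -> F P ->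
  (forall x, A x -> P x) -> (forall x, B x -> P x) ->
  dmu mup A B <= 2 * mup P - mum A - mum B.
Proof.
  intros hA hB hP hAP hBP.
  pose proof (dmu_triangle A P B hA hP hB) as htri; rewrite (dmu_comm A P) in htri.
  pose proof (dmu_le_of_subset P A hP hA hAP); pose proof (dmu_le_of_subset P B hP hB hBP).
  lra.
Qed.

Lemma union_ij_mup_le_geometric (b : nat -> X -> Prop) :
  (forall k, F (b k)) -> (forall k, dmu mup (b k) (b (S k)) < (1/2) ^ (S k)) ->
  forall i j, (i <= j)%nat -> mup (union_ij b i j) <= mup (b i) + (1/2) ^ i.
Proof.
  intros hb hstep.
  assert (hinv : forall i t, mup (union_ij b i (i + t)) <= mup (b i) + (1/2) ^ i - (1/2) ^ (i + t)).
  { intros i t; induction t as [|t IH].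
    - rewrite Nat.add_0_r, union_ij_diag; lra.
    - rewrite <- plus_n_Sm.
      assert (hsplit : mup (union_ij b i (S (i + t)))
                       <= mup (union_ij b i (i + t)) + dmu mup (b (i + t)%nat) (b (S (i + t)))).
      { unfold dmu; apply mup_le_add; try apply (field_union_ij hF);
          try apply (field_symdiff hF); auto.
        rewrite union_ij_succ by lia; intros x [h | h]; [now left |].
        destruct (classic (b (i + t)%nat x)).
        - left; exists (i + t)%nat; split; [lia | assumption].
        - right; right; split; assumption. }
      pose proof (hstep (i + t)%nat); simpl pow in *; lra. }
  intros i j hij; pose proof (hinv i (j - i)%nat) as h.
  replace (i + (j - i))%nat with j in h by lia.
  pose proof (pow_le (1/2) j ltac:(lra)); lra.
Qed.

Lemma d_cauchy_of_union_nets_cvg (A : nat -> X -> Prop) (L : R) :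
  (forall k, F (A k)) ->
  net_cvg (fun i j => mup (union_ij A i j)) L ->
  net_cvg (fun i j => mum (union_ij A i j)) L ->
  d_cauchy (dmu mup) A.
Proof.
  intros hA hp hm eps heps.
  destruct (proj1 (net_cvg_iff_tail _ L) hp (eps / 4) ltac:(lra)) as [Kp hKp].
  destruct (proj1 (net_cvg_iff_tail _ L) hm (eps / 4) ltac:(lra)) as [Km hKm].
  exists (Nat.max Kp Km); intros m n hm' hn'.
  set (P := union_ij A (Nat.min m n) (Nat.max m n)).
  assert (hmem : forall k, (k = m \/ k = n) -> forall x, A k x -> P x)
    by (intros k hk x h; exists k; split; [lia | exact h]).
  pose proof (dmu_le_of_common_superset (A m) (A n) P (hA m) (hA n)
    (field_union_ij hF A hA _ _) (hmem m (or_introl eq_refl)) (hmem n (or_intror eq_refl))).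
  pose proof (hKp (Nat.min m n) (Nat.max m n) ltac:(lia)) as hP.
  pose proof (hKm m m ltac:(lia)) as hAm; pose proof (hKm n n ltac:(lia)) as hAn.
  cbv beta in hP, hAm, hAn; rewrite union_ij_diag in hAm, hAn; fold P in hP.
  apply Rabs_def2 in hP; apply Rabs_def2 in hAm; apply Rabs_def2 in hAn; lra.
Qed.

Lemma union_net_cvg_d_of_cvg (A : nat -> X -> Prop) (L : R) (B : X -> Prop) :
  (forall k, F (A k)) -> F B ->
  net_cvg (fun i j => mup (union_ij A i j)) L ->
  net_cvg (fun i j => mum (union_ij A i j)) L ->
  d_cvg (dmu mup) A B -> net_cvg_d (dmu mup) (union_ij A) B.
Proof.
  intros hA hB hp hm hAB; apply net_cvg_d_iff_tail; intros eps heps.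
  destruct (proj1 (net_cvg_iff_tail _ L) hp (eps / 4) ltac:(lra)) as [Kp hKp].
  destruct (proj1 (net_cvg_iff_tail _ L) hm (eps / 4) ltac:(lra)) as [Km hKm].
  destruct (hAB (eps / 2) ltac:(lra)) as [N hN].
  exists (Nat.max (Nat.max Kp Km) N); intros i j hij.
  assert (hU : F (union_ij A i j)) by exact (field_union_ij hF A hA i j).
  pose proof (dmu_triangle (union_ij A i j) (A j) B hU (hA j) hB).
  assert (hjU : forall x, A j x -> union_ij A i j x) by (intros x h; exists j; split; [lia | exact h]).
  pose proof (dmu_le_of_subset (union_ij A i j) (A j) hU (hA j) hjU).
  pose proof (hKp i j ltac:(lia)) as hUp; pose proof (hKm j j ltac:(lia)) as hAj.
  pose proof (hN j ltac:(lia)).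
  cbv beta in hUp, hAj; rewrite union_ij_diag in hAj.
  apply Rabs_def2 in hUp; apply Rabs_def2 in hAj; lra.
Qed.

Lemma mup_eq_of_cvg (A : nat -> X -> Prop) (L : R) (B : X -> Prop) :
  (forall k, F (A k)) -> F B ->
  net_cvg (fun i j => mup (union_ij A i j)) L ->
  d_cvg (dmu mup) A B -> mup B = L.
Proof.
  intros hA hB hp hAB; apply cond_eq; intros eps heps.
  destruct (proj1 (net_cvg_iff_tail _ L) hp (eps / 2) ltac:(lra)) as [K hK].
  destruct (hAB (eps / 2) ltac:(lra)) as [N hN].
  set (n := Nat.max K N).
  pose proof (hK n n ltac:(lia)) as hAn; cbv beta in hAn; rewrite union_ij_diag in hAn.
  pose proof (Rabs_mup_sub_le_dmu (A n) B (hA n) hB) as hlip.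
  pose proof (hN n ltac:(lia)).
  rewrite Rabs_minus_sym in hlip.
  pose proof (Rabs_triang (mup B - mup (A n)) (mup (A n) - L)).
  replace (mup B - mup (A n) + (mup (A n) - L)) with (mup B - L) in * by ring.
  lra.
Qed.

(* The nets are squeezed between [mum (b i) = mup (b i)] and [mup (b i) + (1/2)^i]. *)
Lemma union_nets_cvg_of_fast (b : nat -> X -> Prop) (L : R) :
  (forall k, F (b k)) -> (forall k, mup (b k) = mum (b k)) ->
  (forall k, dmu mup (b k) (b (S k)) < (1/2) ^ (S k)) ->
  Un_cv (fun k => mup (b k)) L ->
  net_cvg (fun i j => mup (union_ij b i j)) L /\ net_cvg (fun i j => mum (union_ij b i j)) L.
Proof.
  intros hb hbE hstep hL.
  assert (htail : forall eps, eps > 0 -> exists K, forall i j, (K <= i <= j)%nat ->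
            L - eps < mum (union_ij b i j) /\ mup (union_ij b i j) < L + eps).
  { intros eps heps.
    destruct (half_pow_lt (eps / 2) ltac:(lra)) as [K1 hK1].
    destruct (hL (eps / 2) ltac:(lra)) as [K2 hK2].
    exists (Nat.max K1 K2); intros i j hij.
    assert (hU : F (union_ij b i j)) by exact (field_union_ij hF b hb i j).
    pose proof (union_ij_mup_le_geometric b hb hstep i j ltac:(lia)).
    assert (hiU : forall x, b i x -> union_ij b i j x) by (intros x h; exists i; split; [lia | exact h]).
    pose proof (mum_mono (b i) (union_ij b i j) (hb i) hU hiU).
    pose proof (hK1 i ltac:(lia)).
    pose proof (hK2 i ltac:(lia)) as hbi; unfold Rdist in hbi; apply Rabs_def2 in hbi.
    rewrite <- hbE in *; split; lra. }
  assert (hbetween : forall i j, (i <= j)%nat -> mum (union_ij b i j) <= mup (union_ij b i j))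
    by (intros i j _; apply mum_le_mup, (field_union_ij hF b hb)).
  split; apply net_cvg_iff_tail; intros eps heps; destruct (htail eps heps) as [K hK];
    exists K; intros i j hij; specialize (hK i j hij);
    pose proof (hbetween i j ltac:(lia)); apply Rabs_def1; lra.
Qed.

Lemma cauchy_crit_mup (a : nat -> X -> Prop) :
  (forall n, F (a n)) -> d_cauchy (dmu mup) a -> Cauchy_crit (fun n => mup (a n)).
Proof.
  intros ha hcauchy eps heps; destruct (hcauchy eps heps) as [N hN].
  exists N; intros m n hm hn; unfold Rdist.
  pose proof (Rabs_mup_sub_le_dmu (a m) (a n) (ha m) (ha n)).
  pose proof (hN m n hm hn); lra.
Qed.

End ConjugatePair.

Theorem theorem3p3 (X : Type) (F E : (X -> Prop) -> Prop)
  (mup mum : (X -> Prop) -> R)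
  (hF : is_field F) (hEF : forall A, E A -> F A)
  (hconj : conjugate_pair F mup mum)
  (hE : forall A, E A -> mup A = mum A) :
  complete_pseudo E (dmu mup) <->
  (forall A : nat -> X -> Prop, (forall i, E (A i)) ->
     forall L : R,
       net_cvg (fun i j => mup (union_ij A i j)) L ->
       net_cvg (fun i j => mum (union_ij A i j)) L ->
       exists B, E B /\ net_cvg_d (dmu mup) (union_ij A) B /\ mup B = L).
Proof.
  split.
  - intros hcomplete A hA L hp hm.
    assert (hFA : forall k, F (A k)) by (intro; apply hEF, hA).
    destruct (hcomplete A hA (d_cauchy_of_union_nets_cvg hF hconj A L hFA hp hm))
      as [B [hB hAB]].
    exists B; split; [exact hB | split].
    + exact (union_net_cvg_d_of_cvg hF hconj A L B hFA (hEF B hB) hp hm hAB).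
    + exact (mup_eq_of_cvg hF hconj A L B hFA (hEF B hB) hp hAB).
  - intros hcond a ha hcauchy.
    assert (hFa : forall n, F (a n)) by (intro; apply hEF, ha).
    destruct (d_cauchy_fast_subseq _ a hcauchy) as [phi [hphi hfast]].
    destruct (R_complete _ (cauchy_crit_mup hF hconj a hFa hcauchy)) as [L hL].
    set (b := fun k => a (phi k)).
    destruct (union_nets_cvg_of_fast hF hconj b L (fun k => hFa (phi k))
                (fun k => hE _ (ha (phi k))) hfast (Un_cv_subseq _ phi L hphi hL))
      as [hp hm].
    destruct (hcond b (fun k => ha (phi k)) L hp hm) as [B [hB [hnet _]]].
    exists B; split; [exact hB |].
    apply (d_cvg_of_subseq F (dmu mup) (dmu_triangle hF hconj) a phi B hFa (hEF B hB) hphi hcauchy).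
    replace (fun k => a (phi k)) with (fun k => union_ij b k k)
      by (extensionality k; exact (union_ij_diag b k)).
    exact (d_cvg_diag _ _ _ hnet).
Qed.
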